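(* Let $O$ be the origin of $\mathbb{R}^3$ and $R>0$. Let $x:[0,\tau_1]\to\mathbb{R}^3$ be a twice continuously differentiable trajectory with nowhere-vanishing velocity, satisfying $\ddot x(\tau) = -\kappa(\tau)\,x(\tau)$ with $\kappa(\tau)>0$ for all $\tau$, with $A_0 = x(0)$, $|A_0|<R$, and let $B$ be the first point of the trajectory on the sphere $\{|p|=R\}$. Reparametrize the trajectory from $A_0$ to $B$ by arclength $\sigma\in[0,L_{A_0B}]$, where $L_{A_0B}$ is the arclength from $A_0$ to $B$. Define iteratively $\sigma_0=0$ and, for $t\ge 0$: $A_t$ is the point of the trajectory at arclength $\sigma_t$, $d_t$ is the unit tangent direction of the trajectory at $A_t$, $P_t = A_t + u\,d_t$ is the point where the straight ray from $A_t$ in direction $d_t$ meets the sphere $\{|p|=R\}$ (with $u\ge 0$, and $P_t=A_t$ if $A_t$ is on the sphere), $s_t = |A_tP_t|$, and $\sigma_{t+1}=\sigma_t+s_t$. Then $$\lim_{T\to\infty}\sum_{t=0}^{T} s_t = L_{A_0B}.$$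
   Context: This models an iterative ray-tracing step scheme inside the near-field ball of radius $R$ around a black hole centered at $O$, where gravity is approximated by Newtonian attraction toward the center: at each step the ray is advanced along its true (curved) path by the straight-line distance from the current point, along the current tangent direction, to the boundary sphere. $|A_tP_t|$ denotes Euclidean distance. *)

From Stdlib Require Import Reals.
From Coquelicot Require Import Coquelicot.
Open Scope R_scope.

Definition vec : Type := (R * R * R)%type.

Definition vx (a : vec) : R := fst (fst a).
Definition vy (a : vec) : R := snd (fst a).
Definition vz (a : vec) : R := snd a.

Definition vzero : vec := (0, 0, 0).
Definition vadd (a b : vec) : vec := (vx a + vx b, vy a + vy b, vz a + vz b).
Definition vsub (a b : vec) : vec := (vx a - vx b, vy a - vy b, vz a - vz b).
Definition vscale (k : R) (a : vec) : vec := (k * vx a, k * vy a, k * vz a).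

Definition dot (a b : vec) : R := vx a * vx b + vy a * vy b + vz a * vz b.
Definition enorm (a : vec) : R := sqrt (dot a a).

Definition dist3 (A P : vec) : R := enorm (vsub P A).

Definition unit_dir (w : vec) : vec := vscale (/ enorm w) w.

Definition ray_exit (Rad : R) (A d P : vec) : Prop :=
  (exists u : R, 0 <= u /\ P = vadd A (vscale u d)) /\
  enorm P = Rad /\
  (enorm A = Rad -> P = A).

Definition arclength (v : R -> vec) (t : R) : R :=
  RInt (fun r => enorm (v r)) 0 t.

Definition cont_on_at (t1 : R) (f : R -> vec) (t : R) : Prop :=
  filterlim f (within (fun r => 0 <= r <= t1) (locally t)) (locally (f t)).

From Stdlib Require Import Reals Lra ClassicalEpsilon.
From Coquelicot Require Import Coquelicot.
Open Scope R_scope.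

(* Let [A] be a point of the trajectory, [d] its unit tangent there and [S] the
   arclength travelled from [A].  Along the trajectory, with [T] the unit tangent,
   [K = A.d + S - x.T] vanishes at [A] and has derivative
   [kappa (|x|^2 |v|^2 - (x.v)^2) / |v|^3 >= 0], so [K >= 0]; then
   [|A + S d|^2 - |x|^2], which vanishes at [A] and has derivative [2 |v| K], stays
   nonnegative: the trajectory is never farther from [O] than the tangent ray at
   equal length.  Hence it cannot reach the sphere before the ray does, i.e.
   [sigma_t + s_t <= L_{A_0 B}], so each [A_{t+1}] exists by the intermediate value
   theorem.  The [sigma_t] increase to a limit; were it short of [L_{A_0 B}], the
   steps [s_t >= R - |A_t|] would stay bounded away from [0]. *)

Ltac unfold_vec :=
  repeat match goal with a : vec |- _ => destruct a as [[? ?] ?] end;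
  unfold vadd, vsub, vscale, dot, vx, vy, vz in *; simpl in *.

Lemma dot_comm a b : dot a b = dot b a.
Proof. unfold_vec; ring. Qed.

Lemma dot_vscale_l k a b : dot (vscale k a) b = k * dot a b.
Proof. unfold_vec; ring. Qed.

Lemma dot_vscale_r k a b : dot a (vscale k b) = k * dot a b.
Proof. unfold_vec; ring. Qed.

Lemma dot_vadd_vscale a k d :
  dot (vadd a (vscale k d)) (vadd a (vscale k d)) = dot a a + 2 * k * dot a d + k ^ 2 * dot d d.
Proof. unfold_vec; ring. Qed.

Lemma vsub_vadd_l a b : vsub (vadd a b) a = b.
Proof. unfold_vec; f_equal; [f_equal|]; ring. Qed.

Lemma vadd_vscale0 a d : vadd a (vscale 0 d) = a.
Proof. unfold_vec; f_equal; [f_equal|]; ring. Qed.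

Lemma dot_self_nonneg a : 0 <= dot a a.
Proof. unfold_vec; nra. Qed.

Lemma dot_self_pos a : a <> vzero -> 0 < dot a a.
Proof.
  destruct a as [[p q] r]; unfold dot, vx, vy, vz; simpl; intros Ha.
  destruct (Rle_or_lt (p * p + q * q + r * r) 0) as [Hle|]; [exfalso | assumption].
  apply Ha; unfold vzero.
  replace p with 0 by nra; replace q with 0 by nra; replace r with 0 by nra; reflexivity.
Qed.

Lemma dot_sq_le a b : dot a b ^ 2 <= dot a a * dot b b.
Proof.
  destruct a as [[a1 a2] a3], b as [[b1 b2] b3]; unfold dot, vx, vy, vz; simpl.
  replace ((a1 * a1 + a2 * a2 + a3 * a3) * (b1 * b1 + b2 * b2 + b3 * b3))
    with ((a1 * b1 + a2 * b2 + a3 * b3) ^ 2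
          + ((a1 * b2 - a2 * b1) ^ 2 + (a1 * b3 - a3 * b1) ^ 2 + (a2 * b3 - a3 * b2) ^ 2))
    by ring.
  assert (0 <= (a1 * b2 - a2 * b1) ^ 2 + (a1 * b3 - a3 * b1) ^ 2 + (a2 * b3 - a3 * b2) ^ 2)
    by (repeat apply Rplus_le_le_0_compat; apply pow2_ge_0).
  lra.
Qed.

Lemma enorm_nonneg a : 0 <= enorm a.
Proof. apply sqrt_pos. Qed.

Lemma enorm_mul_self a : enorm a * enorm a = dot a a.
Proof. apply sqrt_sqrt, dot_self_nonneg. Qed.

Lemma enorm_pos a : a <> vzero -> 0 < enorm a.
Proof. intros; apply sqrt_lt_R0, dot_self_pos; auto. Qed.

Lemma dot_unit_dir_r a w : dot a (unit_dir w) = dot a w / enorm w.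
Proof. unfold unit_dir, Rdiv; rewrite dot_vscale_r; ring. Qed.

Lemma dot_unit_dir_self w : w <> vzero -> dot (unit_dir w) (unit_dir w) = 1.
Proof.
  intros Hw; pose proof (enorm_pos w Hw).
  unfold unit_dir; rewrite dot_vscale_l, dot_vscale_r, <- enorm_mul_self.
  field; lra.
Qed.

Lemma dist3_vadd_vscale A s d :
  0 <= s -> dot d d = 1 -> dist3 A (vadd A (vscale s d)) = s.
Proof.
  intros Hs Hd; unfold dist3, enorm.
  rewrite vsub_vadd_l, dot_vscale_l, dot_vscale_r, Hd, Rmult_1_r.
  apply sqrt_square, Hs.
Qed.

(* The larger root of [|A + u d|^2 = Rad^2] for a unit [d]; on the sphere, though,
   the exit point is [A] itself, as [ray_exit] demands, even when [d] points
   inwards. *)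
Definition exit_dist (Rad : R) (A d : vec) : R :=
  if Req_EM_T (enorm A) Rad then 0
  else - dot A d + sqrt (dot A d ^ 2 + Rad ^ 2 - dot A A).

Lemma exit_dist_on_sphere Rad A d : enorm A = Rad -> exit_dist Rad A d = 0.
Proof. intros E; unfold exit_dist; destruct Req_EM_T; [reflexivity | contradiction]. Qed.

Section RayExit.

Variables (Rad : R) (A d : vec).
Hypothesis d_unit : dot d d = 1.
Hypothesis A_in : enorm A <= Rad.

Lemma dot_unit_sq_le : dot A d ^ 2 <= dot A A.
Proof. rewrite <- (Rmult_1_r (dot A A)), <- d_unit; apply dot_sq_le. Qed.

Lemma exit_dist_interior : enorm A < Rad ->
  let q := sqrt (dot A d ^ 2 + Rad ^ 2 - dot A A) in
  exit_dist Rad A d = q - dot A d /\ q * q = dot A d ^ 2 + Rad ^ 2 - dot A A /\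
  dot A d < q /\ - dot A d < q.
Proof.
  intros HA q; unfold exit_dist.
  destruct Req_EM_T as [E|_]; [lra|].
  pose proof dot_unit_sq_le as Hb; pose proof (enorm_mul_self A) as HAA.
  pose proof (enorm_nonneg A).
  assert (Hgap : dot A A < Rad ^ 2) by nra.
  assert (Hq : q * q = dot A d ^ 2 + Rad ^ 2 - dot A A) by (apply sqrt_sqrt; nra).
  assert (0 <= q) by apply sqrt_pos.
  repeat split; [unfold q; ring | exact Hq | nra | nra].
Qed.

Lemma exit_dist_nonneg : 0 <= exit_dist Rad A d.
Proof.
  destruct (Req_dec (enorm A) Rad) as [E|Hne].
  - rewrite exit_dist_on_sphere by exact E; lra.
  - destruct (exit_dist_interior ltac:(lra)) as (-> & _ & ? & _); lra.
Qed.

Lemma enorm_exit_point : enorm (vadd A (vscale (exit_dist Rad A d) d)) = Rad.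
Proof.
  destruct (Req_dec (enorm A) Rad) as [E|Hne].
  - rewrite exit_dist_on_sphere, vadd_vscale0 by exact E; exact E.
  - destruct (exit_dist_interior ltac:(lra)) as (-> & Hq & _).
    pose proof (enorm_nonneg A).
    unfold enorm at 1; rewrite dot_vadd_vscale, d_unit.
    transitivity (sqrt (Rad * Rad)); [f_equal; nra | apply sqrt_square; lra].
Qed.

Lemma ray_exit_exit_point : ray_exit Rad A d (vadd A (vscale (exit_dist Rad A d) d)).
Proof.
  split; [|split].
  - exists (exit_dist Rad A d); split; [apply exit_dist_nonneg | reflexivity].
  - apply enorm_exit_point.
  - intros E; rewrite exit_dist_on_sphere by exact E; apply vadd_vscale0.
Qed.

(* Triangle inequality applied to the exit point. *)
Lemma exit_dist_ge : Rad - enorm A <= exit_dist Rad A d.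
Proof.
  set (u := exit_dist Rad A d).
  pose proof enorm_exit_point as HP; fold u in HP.
  pose proof exit_dist_nonneg as Hu; fold u in Hu.
  pose proof dot_unit_sq_le as Hb; pose proof (enorm_mul_self A) as HAA.
  pose proof (enorm_nonneg A).
  assert (Hbu : dot A d <= enorm A) by nra.
  assert (HP2 : Rad * Rad = dot A A + 2 * u * dot A d + u ^ 2).
  { rewrite <- HP, enorm_mul_self, dot_vadd_vscale, d_unit; ring. }
  nra.
Qed.

Lemma enorm_ray_lt s :
  enorm A < Rad -> 0 <= s < exit_dist Rad A d -> enorm (vadd A (vscale s d)) < Rad.
Proof.
  intros HA Hs; destruct (exit_dist_interior HA) as (Hu & Hq & Hb1 & Hb2).
  set (q := sqrt _) in *; rewrite Hu in Hs.
  pose proof (enorm_nonneg A).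
  assert (Hsq : dot (vadd A (vscale s d)) (vadd A (vscale s d)) < Rad ^ 2).
  { rewrite dot_vadd_vscale, d_unit.
    assert (0 < (q - dot A d - s) * (s + dot A d + q)) by (apply Rmult_lt_0_compat; lra).
    nra. }
  unfold enorm; rewrite <- (sqrt_square Rad) by lra.
  apply sqrt_lt_1_alt; split; [apply dot_self_nonneg | lra].
Qed.

End RayExit.

(* [auto_derive], with the derivatives of the unknown functions read off the
   [is_derive] hypotheses. *)
Ltac auto_derive_hyps :=
  auto_derive; [repeat split; try (eexists; eassumption) | ..];
  repeat (erewrite is_derive_unique by eassumption);
  try match goal with |- ?a = ?b => change (@eq R a b) end.

Lemma is_derive_fst {U V : NormedModule R_AbsRing} (f : R -> U * V) t l :
  is_derive f t l -> is_derive (fun s => fst (f s)) t (fst l).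
Proof.
  intros H; eapply filterdiff_ext_lin.
  - eapply (filterdiff_comp f fst); [exact H | apply filterdiff_linear, is_linear_fst].
  - reflexivity.
Qed.

Lemma is_derive_snd {U V : NormedModule R_AbsRing} (f : R -> U * V) t l :
  is_derive f t l -> is_derive (fun s => snd (f s)) t (snd l).
Proof.
  intros H; eapply filterdiff_ext_lin.
  - eapply (filterdiff_comp f snd); [exact H | apply filterdiff_linear, is_linear_snd].
  - reflexivity.
Qed.

Lemma is_derive_vx (f : R -> vec) t l : is_derive f t l -> is_derive (fun s => vx (f s)) t (vx l).
Proof. intros H; exact (is_derive_fst _ _ _ (is_derive_fst _ _ _ H)). Qed.

Lemma is_derive_vy (f : R -> vec) t l : is_derive f t l -> is_derive (fun s => vy (f s)) t (vy l).
Proof. intros H; exact (is_derive_snd _ _ _ (is_derive_fst _ _ _ H)). Qed.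

Lemma is_derive_vz (f : R -> vec) t l : is_derive f t l -> is_derive (fun s => vz (f s)) t (vz l).
Proof. intros H; exact (is_derive_snd _ _ _ H). Qed.

Lemma is_derive_dot (f g : R -> vec) t df dg :
  is_derive f t df -> is_derive g t dg ->
  is_derive (fun s => dot (f s) (g s)) t (dot df (g t) + dot (f t) dg).
Proof.
  intros Hf Hg; unfold dot.
  set (f1 := fun s => vx (f s)); set (f2 := fun s => vy (f s)); set (f3 := fun s => vz (f s)).
  set (g1 := fun s => vx (g s)); set (g2 := fun s => vy (g s)); set (g3 := fun s => vz (g s)).
  assert (is_derive f1 t (vx df)) by exact (is_derive_vx _ _ _ Hf).
  assert (is_derive f2 t (vy df)) by exact (is_derive_vy _ _ _ Hf).
  assert (is_derive f3 t (vz df)) by exact (is_derive_vz _ _ _ Hf).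
  assert (is_derive g1 t (vx dg)) by exact (is_derive_vx _ _ _ Hg).
  assert (is_derive g2 t (vy dg)) by exact (is_derive_vy _ _ _ Hg).
  assert (is_derive g3 t (vz dg)) by exact (is_derive_vz _ _ _ Hg).
  change (is_derive (fun s => f1 s * g1 s + f2 s * g2 s + f3 s * g3 s) t
    (vx df * g1 t + vy df * g2 t + vz df * g3 t
     + (f1 t * vx dg + f2 t * vy dg + f3 t * vz dg))).
  clearbody f1 f2 f3 g1 g2 g3.
  auto_derive_hyps; ring.
Qed.

Lemma continuous_vx (f : R -> vec) t : continuous f t -> continuous (fun s => vx (f s)) t.
Proof.
  intros H; apply (continuous_comp f vx); [exact H|].
  destruct (f t) as [[p q] r]; apply (continuous_comp fst fst); apply continuous_fst.
Qed.

Lemma continuous_vy (f : R -> vec) t : continuous f t -> continuous (fun s => vy (f s)) t.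
Proof.
  intros H; apply (continuous_comp f vy); [exact H|].
  destruct (f t) as [[p q] r]; apply (continuous_comp fst snd);
    [apply continuous_fst | apply continuous_snd].
Qed.

Lemma continuous_vz (f : R -> vec) t : continuous f t -> continuous (fun s => vz (f s)) t.
Proof.
  intros H; apply (continuous_comp f vz); [exact H|].
  destruct (f t) as [[p q] r]; apply continuous_snd.
Qed.

Lemma continuous_dot (f g : R -> vec) t :
  continuous f t -> continuous g t -> continuous (fun s => dot (f s) (g s)) t.
Proof.
  intros Hf Hg; unfold dot.
  repeat apply (@continuous_plus _ _ R_NormedModule); apply (@continuous_mult _ R_AbsRing);
    first [apply continuous_vx | apply continuous_vy | apply continuous_vz]; assumption.
Qed.

Lemma continuous_enorm (f : R -> vec) t : continuous f t -> continuous (fun s => enorm (f s)) t.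
Proof. intros Hf; apply continuous_sqrt_comp, continuous_dot; exact Hf. Qed.

Lemma le_of_is_derive_nonneg (f df : R -> R) a b : a <= b ->
  (forall t, a <= t <= b -> continuous f t) ->
  (forall t, a < t < b -> is_derive f t (df t)) ->
  (forall t, a < t < b -> 0 <= df t) ->
  f a <= f b.
Proof.
  intros Hab Hc Hd Hp.
  (* [Rmax 0 df] agrees with [df] inside, and is nonnegative at the endpoints too. *)
  destruct (MVT_gen f a b (fun t => Rmax 0 (df t))) as [c [_ Hmvt]].
  - intros t Ht; rewrite Rmin_left, Rmax_right in Ht by lra.
    rewrite Rmax_right by (apply Hp; lra); apply Hd; lra.
  - intros t Ht; rewrite Rmin_left, Rmax_right in Ht by lra.
    apply continuity_pt_filterlim, Hc, Ht.
  - pose proof (Rmax_l 0 (df c)); nra.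
Qed.

Lemma is_derive_arclength (v : R -> vec) t :
  (forall s, continuous v s) -> is_derive (arclength v) t (enorm (v t)).
Proof.
  intros Hv; apply (is_derive_RInt (fun s => enorm (v s)) (arclength v) 0).
  - apply filter_forall; intros s; apply (RInt_correct (V := R_CompleteNormedModule)), ex_RInt_continuous.
    intros; apply continuous_enorm, Hv.
  - apply continuous_enorm, Hv.
Qed.

Lemma continuous_arclength (v : R -> vec) t :
  (forall s, continuous v s) -> continuous (arclength v) t.
Proof.
  intros Hv; apply (ex_derive_continuous (arclength v)).
  eexists; apply is_derive_arclength, Hv.
Qed.

(* The motion is only given on [[0, tau1]]; extending it by constants makes it
   continuous on all of [R], as the mean value and intermediate value theorems of
   Coquelicot require. *)
Definition clamp (T t : R) : R := Rmax 0 (Rmin T t).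

Lemma clamp_in T t : 0 <= T -> 0 <= clamp T t <= T.
Proof. intros; unfold clamp, Rmax, Rmin; repeat destruct Rle_dec; lra. Qed.

Lemma clamp_id T t : 0 <= t <= T -> clamp T t = t.
Proof. intros; unfold clamp, Rmax, Rmin; repeat destruct Rle_dec; lra. Qed.

Lemma Rabs_clamp_sub_le T s t : 0 <= T -> Rabs (clamp T s - clamp T t) <= Rabs (s - t).
Proof.
  intros; unfold clamp, Rmax, Rmin; repeat destruct Rle_dec;
    unfold Rabs; repeat destruct Rcase_abs; lra.
Qed.

Lemma continuous_clamp_comp T (f : R -> vec) t : 0 <= T ->
  (forall s, 0 <= s <= T -> cont_on_at T f s) -> continuous (fun s => f (clamp T s)) t.
Proof.
  intros HT Hf.
  apply (filterlim_comp _ _ _ (clamp T) f _ (within (fun r => 0 <= r <= T) (locally (clamp T t)))).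
  - intros P [eps HP]; exists eps; intros s Hs; apply HP.
    + eapply Rle_lt_trans; [apply Rabs_clamp_sub_le, HT | exact Hs].
    + apply clamp_in, HT.
  - apply Hf, clamp_in, HT.
Qed.

Lemma is_derive_clamp_comp T (f : R -> vec) t l : 0 < t < T ->
  is_derive f t l -> is_derive (fun s => f (clamp T s)) t l.
Proof.
  intros Ht Hf; apply (is_derive_ext_loc f); [|exact Hf].
  assert (He : 0 < Rmin t (T - t)) by (apply Rmin_pos; lra).
  exists (mkposreal _ He); intros s Hs.
  apply Rabs_def2 in Hs; simpl in Hs.
  pose proof (Rmin_l t (T - t)); pose proof (Rmin_r t (T - t)).
  unfold minus, plus, opp in Hs; simpl in Hs.
  rewrite clamp_id by lra; reflexivity.
Qed.

Lemma arclength_clamp_comp T (v : R -> vec) t : 0 <= t <= T ->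
  arclength (fun s => v (clamp T s)) t = arclength v t.
Proof.
  intros Ht; apply RInt_ext; intros s Hs.
  rewrite Rmin_left, Rmax_right in Hs by lra.
  rewrite clamp_id by lra; reflexivity.
Qed.

Lemma arclength_le (v : R -> vec) a b :
  (forall s, continuous v s) -> a <= b -> arclength v a <= arclength v b.
Proof.
  intros Hv Hab; apply (le_of_is_derive_nonneg _ (fun s => enorm (v s))); auto.
  - intros; apply continuous_arclength, Hv.
  - intros; apply is_derive_arclength, Hv.
  - intros; apply enorm_nonneg.
Qed.

Section CentralMotion.

Variables (x v : R -> vec) (k : R -> R) (t0 t1 : R).
Hypothesis x_cont : forall t, continuous x t.
Hypothesis v_cont : forall t, continuous v t.
Hypothesis v_neq0 : forall t, v t <> vzero.
Hypothesis x_deriv : forall t, t0 < t < t1 -> is_derive x t (v t).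
Hypothesis v_deriv : forall t, t0 < t < t1 -> is_derive v t (vscale (- k t) (x t)).
Hypothesis k_nonneg : forall t, t0 < t < t1 -> 0 <= k t.

Let S t := arclength v t - arclength v t0.
Let b := dot (x t0) (unit_dir (v t0)).

Lemma is_derive_dot_pos_vel t : t0 < t < t1 ->
  is_derive (fun s => dot (x s) (v s)) t (dot (v t) (v t) - k t * dot (x t) (x t)).
Proof.
  intros Ht.
  replace (_ - _) with (dot (v t) (v t) + dot (x t) (vscale (- k t) (x t)))
    by (rewrite dot_vscale_r; ring).
  apply is_derive_dot; auto.
Qed.

Lemma is_derive_speed t : t0 < t < t1 ->
  is_derive (fun s => enorm (v s)) t (- k t * dot (x t) (v t) / enorm (v t)).
Proof.
  intros Ht.
  pose proof (is_derive_dot v v t _ _ (v_deriv t Ht) (v_deriv t Ht)) as Hvv.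
  pose proof (enorm_pos _ (v_neq0 t)).
  replace (_ / enorm (v t)) with
    ((dot (vscale (- k t) (x t)) (v t) + dot (v t) (vscale (- k t) (x t))) / (2 * enorm (v t))).
  - apply (is_derive_sqrt (fun s => dot (v s) (v s))), dot_self_pos, v_neq0; exact Hvv.
  - rewrite dot_vscale_l, dot_vscale_r, (dot_comm (v t)); field; lra.
Qed.

Lemma dot_unit_tangent_le t : t0 <= t <= t1 -> dot (x t) (unit_dir (v t)) <= b + S t.
Proof.
  intros Ht.
  set (K s := b + S s - dot (x s) (v s) / enorm (v s)).
  enough (HK : K t0 <= K t).
  { unfold K, S in *; rewrite Rminus_diag, <- !dot_unit_dir_r in HK; fold b in HK; lra. }
  apply (le_of_is_derive_nonneg K (fun s => k s *
    (dot (x s) (x s) * dot (v s) (v s) - dot (x s) (v s) ^ 2) / enorm (v s) ^ 3)); [lra | | |].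
  - intros s _; unfold K, S.
    set (g s := dot (x s) (v s)); set (n s := enorm (v s)); set (L := arclength v).
    assert (continuity_pt L s)
      by apply continuity_pt_filterlim, continuous_arclength, v_cont.
    assert (continuity_pt g s) by (apply continuity_pt_filterlim, continuous_dot; auto).
    assert (continuity_pt n s) by (apply continuity_pt_filterlim, continuous_enorm; auto).
    assert (n s <> 0) by apply Rgt_not_eq, enorm_pos, v_neq0.
    apply continuity_pt_filterlim.
    change (continuity_pt (fun s => b + (L s - L t0) - g s / n s) s); reg.
  - intros s Hs.
    assert (Hs' : t0 < s < t1) by lra.
    pose proof (is_derive_dot_pos_vel s Hs'); pose proof (is_derive_speed s Hs').
    pose proof (is_derive_arclength v s v_cont).
    pose proof (enorm_pos _ (v_neq0 s)) as Hn; pose proof (enorm_mul_self (v s)) as Hn2.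
    unfold K, S.
    set (g s := dot (x s) (v s)); set (n s := enorm (v s)); set (L := arclength v).
    change (is_derive (fun s => b + (L s - L t0) - g s / n s) s
      (k s * (dot (x s) (x s) * dot (v s) (v s) - g s ^ 2) / n s ^ 3)).
    auto_derive_hyps; unfold g, n; [lra|].
    rewrite <- Hn2; field; lra.
  - intros s Hs.
    pose proof (dot_sq_le (x s) (v s)); pose proof (enorm_pos _ (v_neq0 s)).
    apply Rmult_le_pos; [apply Rmult_le_pos; [apply k_nonneg; lra | lra] |].
    apply Rlt_le, Rinv_0_lt_compat, pow_lt; lra.
Qed.

Lemma enorm_le_tangent_ray t : t0 <= t <= t1 ->
  enorm (x t) <= enorm (vadd (x t0) (vscale (S t) (unit_dir (v t0)))).
Proof.
  intros Ht; apply sqrt_le_1_alt.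
  rewrite dot_vadd_vscale, dot_unit_dir_self, Rmult_1_r by apply v_neq0; fold b.
  set (G s := dot (x t0) (x t0) + 2 * S s * b + S s ^ 2 - dot (x s) (x s)).
  enough (HG : G t0 <= G t) by (unfold G, S in *; rewrite Rminus_diag in HG; lra).
  apply (le_of_is_derive_nonneg G
    (fun s => 2 * enorm (v s) * (b + S s - dot (x s) (unit_dir (v s))))); [lra | | |].
  - intros s _; unfold G, S.
    set (xx s := dot (x s) (x s)); set (L := arclength v).
    assert (continuity_pt L s)
      by apply continuity_pt_filterlim, continuous_arclength, v_cont.
    assert (continuity_pt xx s) by (apply continuity_pt_filterlim, continuous_dot; auto).
    apply continuity_pt_filterlim.
    change (continuity_pt (fun s => dot (x t0) (x t0) + 2 * (L s - L t0) * b + (L s - L t0) ^ 2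
                                    - xx s) s); reg.
  - intros s Hs.
    pose proof (is_derive_dot x x s _ _ (x_deriv s ltac:(lra)) (x_deriv s ltac:(lra))).
    pose proof (is_derive_arclength v s v_cont).
    pose proof (enorm_pos _ (v_neq0 s)).
    unfold G, S.
    set (xx s := dot (x s) (x s)); set (L := arclength v).
    change (is_derive (fun s => dot (x t0) (x t0) + 2 * (L s - L t0) * b + (L s - L t0) ^ 2 - xx s) s
      (2 * enorm (v s) * (b + (L s - L t0) - dot (x s) (unit_dir (v s))))).
    auto_derive_hyps.
    rewrite dot_unit_dir_r, (dot_comm (v s)); field; lra.
  - intros s Hs.
    pose proof (dot_unit_tangent_le s ltac:(lra)); pose proof (enorm_nonneg (v s)).
    apply Rmult_le_pos; lra.
Qed.

Lemma exit_dist_le_arclength Rad : t0 <= t1 ->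
  enorm (x t0) < Rad -> enorm (x t1) = Rad ->
  exit_dist Rad (x t0) (unit_dir (v t0)) <= S t1.
Proof.
  intros Ht01 Hin Hout; apply Rnot_lt_le; intros Hlt.
  assert (0 <= S t1) by (pose proof (arclength_le v t0 t1 v_cont Ht01); unfold S; lra).
  pose proof (enorm_le_tangent_ray t1 ltac:(lra)).
  pose proof (enorm_ray_lt Rad (x t0) (unit_dir (v t0)) (dot_unit_dir_self _ (v_neq0 t0))
                (S t1) Hin ltac:(lra)).
  lra.
Qed.

End CentralMotion.

Lemma exists_increment_sequence (L s : R -> R) (b : R) :
  0 <= b -> (forall t, continuous L t) ->
  (forall t, 0 <= t <= b -> 0 <= s t /\ L t + s t <= L b) ->
  exists tau : nat -> R,
    tau 0%nat = 0 /\ (forall n, 0 <= tau n <= b) /\ (forall n, tau n <= tau (S n)) /\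
    (forall n, L (tau (S n)) = L (tau n) + s (tau n)).
Proof.
  intros Hb0 HL Hs.
  assert (Hnext : forall t, exists z, 0 <= t <= b -> t <= z <= b /\ L z = L t + s t).
  { intros t; destruct (Rle_dec 0 t) as [H0|]; [destruct (Rle_dec t b) as [Hb|]|];
      [|exists t; intros; lra..].
    destruct (Hs t (conj H0 Hb)) as [Hst HtL].
    destruct (IVT_gen_consistent L t b (L t + s t) HL) as [z [Hz HLz]].
    { rewrite Rmin_left, Rmax_right by lra; lra. }
    exists z; intros _; rewrite Rmin_left, Rmax_right in Hz by lra; split; assumption. }
  destruct (choice _ Hnext) as [next Hnext'].
  assert (Hin : forall n, 0 <= Nat.iter n next 0 <= b).
  { induction n as [|n IH]; simpl; [|destruct (Hnext' _ IH)]; lra. }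
  exists (fun n => Nat.iter n next 0); split; [reflexivity|]; split; [exact Hin|].
  split; intros n; destruct (Hnext' _ (Hin n)); simpl; lra.
Qed.

Lemma is_lim_seq_increasing_to_bound (tau : nat -> R) (b : R) (L c : R -> R) :
  (forall n, tau n <= tau (S n)) -> (forall n, tau n <= b) ->
  (forall t, continuous L t) -> (forall t, continuous c t) ->
  (forall t, tau 0%nat <= t < b -> 0 < c t) ->
  (forall n, c (tau n) <= L (tau (S n)) - L (tau n)) ->
  is_lim_seq tau b.
Proof.
  intros Hmono Hb HL Hc Hpos Hstep.
  assert (Hge : forall n, tau 0%nat <= tau n)
    by (induction n as [|n IH]; [lra | specialize (Hmono n); lra]).
  pose proof (Lim_seq_correct tau (ex_lim_seq_incr tau Hmono)) as Hlim.
  pose proof (is_lim_seq_le _ _ _ _ Hb Hlim (is_lim_seq_const b)) as Hr_le.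
  pose proof (is_lim_seq_le _ _ _ _ Hge (is_lim_seq_const _) Hlim) as Hr_ge.
  destruct (Lim_seq tau) as [r| |]; simpl in Hr_le, Hr_ge; try contradiction.
  destruct (Req_dec r b) as [<-|Hne]; [exact Hlim | exfalso].
  assert (HLr : forall u, is_lim_seq u r -> is_lim_seq (fun n => L (u n)) (L r))
    by (intros u Hu; apply is_lim_seq_continuous; [apply continuity_pt_filterlim, HL | exact Hu]).
  assert (Hincr : is_lim_seq (fun n => L (tau (S n)) - L (tau n)) (L r - L r)).
  { apply is_lim_seq_minus'; apply HLr; [apply (is_lim_seq_incr_1 tau) |]; exact Hlim. }
  assert (Hcr : is_lim_seq (fun n => c (tau n)) (c r))
    by (apply is_lim_seq_continuous; [apply continuity_pt_filterlim, Hc | exact Hlim]).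
  pose proof (is_lim_seq_le _ _ _ _ Hstep Hcr Hincr) as Hcr_le; simpl in Hcr_le.
  pose proof (Hpos r ltac:(lra)); lra.
Qed.

Lemma sum_f_R0_telescope (f : nat -> R) T :
  sum_f_R0 (fun n => f (S n) - f n) T = f (S T) - f 0%nat.
Proof. induction T as [|T IH]; simpl; [reflexivity | rewrite IH; ring]. Qed.

Lemma exists_increment_sequence_sum_cvg (L s c : R -> R) (b : R) :
  0 <= b -> (forall t, continuous L t) -> (forall t, continuous c t) ->
  (forall t, 0 <= t <= b -> 0 <= s t /\ L t + s t <= L b) ->
  (forall t, 0 <= t < b -> 0 < c t) -> (forall t, 0 <= t <= b -> c t <= s t) ->
  exists tau : nat -> R,
    tau 0%nat = 0 /\ (forall n, 0 <= tau n <= b) /\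
    (forall n, L (tau (S n)) = L (tau n) + s (tau n)) /\
    is_lim_seq (fun T => sum_f_R0 (fun n => s (tau n)) T) (L b - L 0).
Proof.
  intros Hb HL Hc Hs Hpos Hcs.
  destruct (exists_increment_sequence L s b Hb HL Hs) as (tau & tau0 & tau_in & tau_mono & tau_step).
  exists tau; split; [exact tau0|]; split; [exact tau_in|]; split; [exact tau_step|].
  assert (tau_lim : is_lim_seq tau b).
  { apply (is_lim_seq_increasing_to_bound tau b L c tau_mono); auto.
    - intros n; apply tau_in.
    - intros t Ht; rewrite tau0 in Ht; auto.
    - intros n; rewrite tau_step; ring_simplify; apply Hcs, tau_in. }
  apply (is_lim_seq_ext (fun T => L (tau (S T)) - L (tau 0%nat))).
  { intros T; rewrite <- (sum_f_R0_telescope (fun n => L (tau n))).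
    apply sum_eq; intros; rewrite tau_step; ring. }
  rewrite <- tau0; apply is_lim_seq_minus'; [|apply is_lim_seq_const].
  apply is_lim_seq_continuous; [apply continuity_pt_filterlim, HL|].
  apply (is_lim_seq_incr_1 tau), tau_lim.
Qed.

Section ClampedMotion.

Variables (tau1 : R) (x v : R -> vec) (kappa : R -> R).
Hypothesis tau1_nonneg : 0 <= tau1.
Hypothesis x_cont : forall t, 0 <= t <= tau1 -> cont_on_at tau1 x t.
Hypothesis v_cont : forall t, 0 <= t <= tau1 -> cont_on_at tau1 v t.
Hypothesis v_neq0 : forall t, 0 <= t <= tau1 -> v t <> vzero.
Hypothesis x_deriv : forall t, 0 < t < tau1 -> is_derive x t (v t).
Hypothesis v_deriv : forall t, 0 < t < tau1 -> is_derive v t (vscale (- kappa t) (x t)).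
Hypothesis kappa_nonneg : forall t, 0 < t < tau1 -> 0 <= kappa t.

Let L := arclength (fun s => v (clamp tau1 s)).

Lemma exit_dist_le_clamp_arclength Rad t0 t1 : 0 <= t0 <= t1 -> t1 <= tau1 ->
  enorm (x t0) < Rad -> enorm (x t1) = Rad ->
  exit_dist Rad (x t0) (unit_dir (v t0)) <= L t1 - L t0.
Proof.
  intros Ht0 Ht1 Hin Hout.
  set (xc s := x (clamp tau1 s)); set (vc s := v (clamp tau1 s)).
  assert (xc_eq : forall t, 0 <= t <= tau1 -> xc t = x t)
    by (intros; unfold xc; rewrite clamp_id; auto).
  assert (vc_eq : forall t, 0 <= t <= tau1 -> vc t = v t)
    by (intros; unfold vc; rewrite clamp_id; auto).
  rewrite <- xc_eq, <- vc_eq in * by lra.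
  apply (exit_dist_le_arclength xc vc (fun s => kappa (clamp tau1 s))); auto.
  - intros; apply continuous_clamp_comp; assumption.
  - intros; apply continuous_clamp_comp; assumption.
  - intros; apply v_neq0, clamp_in, tau1_nonneg.
  - intros s Hs; rewrite vc_eq by lra; apply is_derive_clamp_comp, x_deriv; lra.
  - intros s Hs; rewrite xc_eq, clamp_id by lra.
    apply is_derive_clamp_comp, v_deriv; lra.
  - intros s Hs; rewrite clamp_id by lra; apply kappa_nonneg; lra.
  - lra.
Qed.

Variables (Rad tauB : R).
Hypothesis tauB_in : 0 <= tauB <= tau1.
Hypothesis B_out : enorm (x tauB) = Rad.
Hypothesis B_first : forall t, 0 <= t < tauB -> enorm (x t) < Rad.

Lemma enorm_le_until_exit t : 0 <= t <= tauB -> enorm (x t) <= Rad.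
Proof.
  intros Ht; destruct (Req_dec t tauB) as [->|]; [lra|].
  apply Rlt_le, B_first; lra.
Qed.

Lemma exit_dist_step_bound t : 0 <= t <= tauB ->
  0 <= exit_dist Rad (x t) (unit_dir (v t)) /\
  L t + exit_dist Rad (x t) (unit_dir (v t)) <= L tauB.
Proof.
  intros Ht; split.
  { apply exit_dist_nonneg, enorm_le_until_exit, Ht; apply dot_unit_dir_self, v_neq0; lra. }
  destruct (Req_dec t tauB) as [->|Hne].
  - rewrite exit_dist_on_sphere by exact B_out; lra.
  - pose proof (exit_dist_le_clamp_arclength Rad t tauB ltac:(lra) ltac:(lra)
                  (B_first t ltac:(lra)) B_out); lra.
Qed.

Lemma exists_exit_sequence :
  exists tau : nat -> R,
    tau 0%nat = 0 /\ (forall n, 0 <= tau n <= tauB) /\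
    (forall n, L (tau (S n)) = L (tau n) + exit_dist Rad (x (tau n)) (unit_dir (v (tau n)))) /\
    is_lim_seq (fun T => sum_f_R0 (fun n => exit_dist Rad (x (tau n)) (unit_dir (v (tau n)))) T)
      (L tauB - L 0).
Proof.
  apply (exists_increment_sequence_sum_cvg L (fun t => exit_dist Rad (x t) (unit_dir (v t)))
           (fun t => Rad - enorm (x (clamp tau1 t))) tauB).
  - lra.
  - intros; apply continuous_arclength; intros; apply continuous_clamp_comp; assumption.
  - intros; apply (@continuous_minus _ _ R_NormedModule); [apply continuous_const|].
    apply continuous_enorm, continuous_clamp_comp; assumption.
  - exact exit_dist_step_bound.
  - intros t Ht; rewrite clamp_id by lra; pose proof (B_first t Ht); lra.
  - intros t Ht; rewrite clamp_id by lra.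
    apply exit_dist_ge; [apply dot_unit_dir_self, v_neq0; lra | apply enorm_le_until_exit, Ht].
Qed.

End ClampedMotion.

Theorem proposition2
  (Rad tau1 tauB : R) (x v a : R -> vec) (kappa : R -> R) :
  0 < Rad -> 0 < tau1 ->
  (* x is C^2 on [0, tau1], with velocity v and acceleration a *)
  (forall t, 0 < t < tau1 -> is_derive x t (v t)) ->
  (forall t, 0 < t < tau1 -> is_derive v t (a t)) ->
  (forall t, 0 <= t <= tau1 -> cont_on_at tau1 x t) ->
  (forall t, 0 <= t <= tau1 -> cont_on_at tau1 v t) ->
  (forall t, 0 <= t <= tau1 -> cont_on_at tau1 a t) ->
  (* nowhere-vanishing velocity *)
  (forall t, 0 <= t <= tau1 -> v t <> vzero) ->
  (* central attraction: x'' = - kappa x, kappa > 0 *)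
  (forall t, 0 <= t <= tau1 -> 0 < kappa t /\ a t = vscale (- kappa t) (x t)) ->
  (* A_0 = x 0 strictly inside the ball *)
  enorm (x 0) < Rad ->
  (* B = x tauB is the first point of the trajectory on the sphere *)
  0 < tauB <= tau1 ->
  enorm (x tauB) = Rad ->
  (forall t, 0 <= t < tauB -> enorm (x t) < Rad) ->
  (* the iteration is well defined (A_t = x (tau t) has arclength sigma_t in
     [0, L_{A0 B}]), and the partial sums of s_t converge to L_{A0 B} *)
  exists (tau : nat -> R) (P : nat -> vec),
    tau 0%nat = 0 /\
    (forall n, 0 <= tau n <= tauB) /\
    (forall n, ray_exit Rad (x (tau n)) (unit_dir (v (tau n))) (P n)) /\
    (forall n, arclength v (tau (S n)) =
               arclength v (tau n) + dist3 (x (tau n)) (P n)) /\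
    is_lim_seq (fun T => sum_f_R0 (fun n => dist3 (x (tau n)) (P n)) T)
               (arclength v tauB).
Proof.
  intros _ Htau1 x_deriv v_deriv x_cont v_cont _ v_neq0 central _ HB HB_out HB_first.
  assert (v_deriv' : forall t, 0 < t < tau1 -> is_derive v t (vscale (- kappa t) (x t)))
    by (intros t Ht; rewrite <- (proj2 (central t ltac:(lra))); auto).
  assert (kappa_nonneg : forall t, 0 < t < tau1 -> 0 <= kappa t)
    by (intros t Ht; apply Rlt_le, central; lra).
  destruct (exists_exit_sequence tau1 x v kappa ltac:(lra) x_cont v_cont v_neq0 x_deriv v_deriv'
              kappa_nonneg Rad tauB ltac:(lra) HB_out HB_first)
    as (tau & tau0 & tau_in & tau_step & tau_sum).
  set (L := arclength (fun s => v (clamp tau1 s))) in *.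
  set (u t := exit_dist Rad (x t) (unit_dir (v t))) in *.
  assert (d_unit : forall n, dot (unit_dir (v (tau n))) (unit_dir (v (tau n))) = 1)
    by (intros n; apply dot_unit_dir_self, v_neq0; pose proof (tau_in n); lra).
  assert (x_in : forall n, enorm (x (tau n)) <= Rad)
    by (intros n; apply (enorm_le_until_exit x Rad tauB HB_out HB_first), tau_in).
  assert (L_eq : forall t, 0 <= t <= tauB -> arclength v t = L t)
    by (intros; symmetry; apply arclength_clamp_comp; lra).
  exists tau, (fun n => vadd (x (tau n)) (vscale (u (tau n)) (unit_dir (v (tau n))))).
  assert (dist_step : forall n,
    dist3 (x (tau n)) (vadd (x (tau n)) (vscale (u (tau n)) (unit_dir (v (tau n))))) = u (tau n))
    by (intros; apply dist3_vadd_vscale; [apply exit_dist_nonneg|]; auto).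
  split; [exact tau0|]; split; [exact tau_in|]; split; [|split].
  - intros n; apply ray_exit_exit_point; auto.
  - intros n; rewrite !L_eq, dist_step by auto; apply tau_step.
  - rewrite L_eq by lra; replace (L tauB) with (L tauB - L 0)
      by (unfold L, arclength; rewrite RInt_point; apply Rminus_0_r).
    apply (is_lim_seq_ext _ _ _ (fun T => sum_eq _ _ T (fun n _ => eq_sym (dist_step n)))).
    exact tau_sum.
Qed.
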